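(* Let $p$ be a prime, let $e\geq2$ and $d\geq2$ be integers, let $\lambda\in\{1,\dots,\min(e,d-1)\}$, and let $\alpha=(\alpha_1,\dots,\alpha_d)\in\mathcal R_\lambda(d,e)$ with $\mu=\mu(\alpha)$. Then $$\sum_{i=1}^d p^{\alpha_i}x_i\geq \lambda p^{\mu+1}+(d-\lambda)p^\mu$$ for every $(x_1,\dots,x_d)\in\mathcal P(p^e,d)$, where $\mathcal P(p^e,d)\subset\mathbb R^d$ is the convex hull of all $d$-dimensional vector-factorisations of $p^e$.
   Context: $\mathbb N=\{0,1,2,\dots\}$. A $d$-dimensional vector-factorisation of $N\geq1$ is a vector $(v_1,\dots,v_d)\in\mathbb N^d$ with $v_1\cdots v_d=N$. $\mathcal R_\lambda(d,e)$ is the set of all $\alpha\in\mathbb N^d$ with $\min(\alpha_1,\dots,\alpha_d)=0$, $\max(\alpha_1,\dots,\alpha_d)\,d<e+\sum_i\alpha_i$ and $e+\sum_i\alpha_i\equiv\lambda\pmod d$. For such $\alpha$, $\mu(\alpha)$ is the integer with $\mu(\alpha)d+\lambda=e+\sum_{i=1}^d\alpha_i$. *)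

From HB Require Import structures.
From mathcomp Require Import all_boot all_order all_algebra.
From mathcomp Require Import reals.
Set Implicit Arguments. Unset Strict Implicit. Unset Printing Implicit Defensive.
Import Order.TTheory GRing.Theory Num.Theory.

Definition vector_factorisation (d N : nat) (v : 'I_d -> nat) : Prop :=
  (\prod_(i < d) v i)%N = N.

Definition R_lambda (lambda d e : nat) (alpha : 'I_d -> nat) : Prop :=
  (exists i, alpha i = 0%N) /\
  ((\max_(i < d) alpha i) * d < e + \sum_(i < d) alpha i)%N /\
  (e + \sum_(i < d) alpha i = lambda %[mod d])%N.

Definition in_P (R : realType) (N d : nat) (x : 'I_d -> R) : Prop :=
  exists (m : nat) (v : 'I_m -> 'I_d -> nat) (t : 'I_m -> R),
    (forall j, vector_factorisation N (v j)) /\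
    (forall j, 0 <= t j)%R /\
    (\sum_(j < m) t j = 1)%R /\
    (forall i, x i = \sum_(j < m) t j * ((v j i)%:R))%R.

From HB Require Import structures.
From mathcomp Require Import all_boot all_order all_algebra.
From mathcomp Require Import reals.
From mathcomp Require Import zify.
Import Order.TTheory GRing.Theory Num.Theory.

(* The vertices of P(p^e, d) are the vectors (p^b_1, ..., p^b_d) with
   b_1 + ... + b_d = e, on which the linear form takes the value
   sum_i p^(alpha_i + b_i), an exponent vector c with sum c = mu d + lambda.
   Convexity of k |-> p^k gives p^c >= p^mu + (c - mu) p^mu (p - 1), and summing
   these tangent-line bounds over i yields exactly
   lambda p^(mu+1) + (d - lambda) p^mu.  A linear form bounded below on the
   vertices is bounded below on their convex hull. *)

Lemma bernoulli_expn (p k : nat) : 0 < p -> 1 + k * (p - 1) <= p ^ k.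
Proof.
move=> p_gt0; elim: k => [|k IHk]; first by rewrite expn0.
have pk_gt0 : 0 < p ^ k by rewrite expn_gt0 p_gt0.
rewrite expnS; nia.
Qed.

(* p^c >= p^mu + (c - mu) p^mu (p - 1), with both sides shifted to avoid
   truncated subtraction. *)
Lemma expn_ge_tangent (p mu c : nat) : 1 < p ->
  p ^ mu + c * (p ^ mu * (p - 1)) <= p ^ c + mu * (p ^ mu * (p - 1)).
Proof.
move=> p_gt1; have pmu_gt0 : 0 < p ^ mu by rewrite expn_gt0; lia.
case: (leqP mu c) => [le_mu_c | lt_c_mu].
- rewrite -(subnKC le_mu_c) expnD.
  have := @bernoulli_expn p (c - mu) (ltnW p_gt1); nia.
- have : p ^ mu <= p ^ mu * (p - 1) by nia.
  nia.
Qed.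

Lemma sum_expn_ge (p mu lambda d : nat) (c : 'I_d -> nat) :
  1 < p -> lambda <= d -> \sum_(i < d) c i = mu * d + lambda ->
  lambda * p ^ mu.+1 + (d - lambda) * p ^ mu <= \sum_(i < d) p ^ c i.
Proof.
move=> p_gt1 le_lambda_d sum_c.
have tangent_sum : \sum_(i < d) (p ^ mu + c i * (p ^ mu * (p - 1)))
    <= \sum_(i < d) (p ^ c i + mu * (p ^ mu * (p - 1))).
  by apply: leq_sum => i _; apply: expn_ge_tangent.
move: tangent_sum.
rewrite !big_split /= -big_distrl /= sum_c !sum_nat_const card_ord expnS.
nia.
Qed.

Lemma vector_factorisation_pfactor {p e d : nat} {v : 'I_d -> nat} :
  prime p -> vector_factorisation (p ^ e) v ->
  exists2 b : 'I_d -> nat, \sum_(i < d) b i = e & forall i, v i = p ^ b i.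
Proof.
move=> p_prime prod_v; have p_gt1 := prime_gt1 p_prime.
have v_pfactor i : exists b, v i == p ^ b.
  have : v i %| p ^ e by rewrite -prod_v /vector_factorisation (bigD1 i) //= dvdn_mulr.
  by case/dvdn_pfactor => // b _ ->; exists b.
exists (fun i => xchoose (v_pfactor i)); last by move=> i; exact/eqP/(xchooseP (v_pfactor i)).
apply/eqP; rewrite -(eqn_exp2l _ _ p_gt1) -prod_v /vector_factorisation.
rewrite (big_morph _ (expnD p) (expn0 p)); apply/eqP/eq_bigr => i _.
exact/esym/eqP/(xchooseP (v_pfactor i)).
Qed.

Lemma in_P_linear_ge (R : realType) (N d : nat) (w : 'I_d -> R) (K : R)
    (x : 'I_d -> R) :
  (forall v, vector_factorisation N v -> K <= \sum_(i < d) w i * (v i)%:R)%R ->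
  @in_P R N d x -> (K <= \sum_(i < d) w i * x i)%R.
Proof.
move=> vertex_ge [m [v [t [factor_v [t_ge0 [sum_t x_def]]]]]].
under eq_bigr => i _ do rewrite x_def mulr_sumr.
have -> : K = (\sum_(j < m) t j * K)%R by rewrite -mulr_suml sum_t mul1r.
rewrite exchange_big /=.
apply: ler_sum => j _.
under eq_bigr => i _ do rewrite mulrCA.
by rewrite -mulr_sumr; apply: ler_wpM2l => //; exact: vertex_ge.
Qed.

Theorem proposition3p1 (R : realType) (p e d lambda : nat) (alpha : 'I_d -> nat)
    (mu : nat) (x : 'I_d -> R) :
  prime p -> (2 <= e)%N -> (2 <= d)%N ->
  (1 <= lambda)%N -> (lambda <= minn e d.-1)%N ->
  @R_lambda lambda d e alpha ->
  (mu * d + lambda = e + \sum_(i < d) alpha i)%N ->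
  @in_P R (p ^ e) d x ->
  ((lambda * p ^ mu.+1 + (d - lambda) * p ^ mu)%:R
     <= \sum_(i < d) (p ^ alpha i)%:R * x i)%R.
Proof.
move=> p_prime _ _ _ lambda_le _ mu_def; apply: in_P_linear_ge => v prod_v.
have le_lambda_d : (lambda <= d)%N by move: lambda_le; rewrite leq_min; lia.
have [b sum_b v_def] := vector_factorisation_pfactor p_prime prod_v.
under eq_bigr => i _ do rewrite v_def -natrM -expnD.
rewrite -natr_sum ler_nat sum_expn_ge ?prime_gt1 //.
by rewrite big_split /= sum_b mu_def addnC.
Qed.
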